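(* Let $U^*(\beta,T_1,T_2)$ denote a maximizer over $U\in\{0,1,\dots,N_1-1\}$ of $c^{\mathrm{ub}}(U,T_1,T_2)\beta^{-2/\max\{\alpha_1,\alpha_2\}}$ when $\alpha_1\ne\alpha_2$, and of $(\mathcal A_1c_1(U,T_1,T_2)+\mathcal A_2c_2(T_1,T_2))\beta^{-2/\alpha}$ when $\alpha_1=\alpha_2=\alpha$. Then for arbitrary $\alpha_1,\alpha_2>2$ there exists $\underline\beta<\infty$ such that for all $\beta>\underline\beta$, $U^*(\beta,T_1,T_2)=0$ (i.e. $U=0$ attains the maximum).
   Context: Parameters: integers $N_1>N_2\ge1$, $P_1,P_2>0$, $\alpha_1,\alpha_2>2$, $\lambda_1,\lambda_2>0$, $T_1,T_2\ge1$; $U\in\{0,\dots,N_1-1\}$. $\mathcal A_1=2\pi\lambda_1\int_0^\infty z e^{-\pi\lambda_1z^2}\exp(-\pi\lambda_2(P_2/P_1)^{2/\alpha_2}z^{2\alpha_1/\alpha_2})dz$, $\mathcal A_2=2\pi\lambda_2\int_0^\infty z e^{-\pi\lambda_2z^2}\exp(-\pi\lambda_1(P_1/P_2)^{2/\alpha_1}z^{2\alpha_2/\alpha_1})dz$, $f_{Y_1}(y)=\frac{2\pi\lambda_1}{\mathcal A_1}y\exp(-\pi(\lambda_1y^2+\lambda_2(P_2/P_1)^{2/\alpha_2}y^{2\alpha_1/\alpha_2}))$, $f_{Y_2}(y)=\frac{2\pi\lambda_2}{\mathcal A_2}y\exp(-\pi(\lambda_1(P_1/P_2)^{2/\alpha_1}y^{2\alpha_2/\alpha_1}+\lambda_2y^2))$;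 $\bar L_j(T_j)=2\pi\lambda_j\int_0^\infty r\int_{(P_j/(P_1T_j))^{1/\alpha_j}r^{\alpha_1/\alpha_j}}^{(P_j/P_1)^{1/\alpha_j}r^{\alpha_1/\alpha_j}}f_{Y_j}(y)dy\,dr$, $\bar L=\bar L_1(T_1)+\bar L_2(T_2)$; $\Pr(u_{\mathrm{IN},0}=u)=e^{-\bar L}\bar L^u/u!$ for $0\le u<U$ and $\sum_{k\ge U}e^{-\bar L}\bar L^k/k!$ for $u=U$. $B(a,b)=\int_0^1t^{a-1}(1-t)^{b-1}dt$; $\mathcal M_n=\{(m_a)_{a=1}^n\in\mathbb N_0^n:\sum_aa\,m_a=n\}$. In all sums below, $\sum$ over $n_2$ runs from $0$ to $n$, $(p_a)\in\mathcal M_{n_2}$, $(q_a)\in\mathcal M_{n-n_2}$, and $P:=\sum_ap_a$, $Q:=\sum_aq_a$. $\eta_1(U,T_1,T_2)=\frac{\pi\lambda_1}{\mathcal A_1}\sum_{u=0}^U\Pr(u_{\mathrm{IN},0}=u)\sum_{n=0}^{N_1-u-1}\frac1{n!}\sum\binom n{n_2}\frac{n_2!}{\prod p_a!}\frac{(n-n_2)!}{\prod q_a!}\prod_{a=1}^{n_2}\big(\frac{2\pi\lambda_1}{\alpha_1}B(1+\frac2{\alpha_1},a-\frac2{\alpha_1})\big)^{p_a}\prod_{a=1}^{n-n_2}\big(\frac{2\pi\lambda_2}{\alpha_2}(\frac{P_2}{P_1})^{2/\alpha_2}B(1+\frac2{\alpha_2},a-\frac2{\alpha_2})\big)^{q_a}\big(\frac{2\pi\lambda_1}{\alpha_1}B(\frac2{\alpha_1},1-\frac2{\alpha_1})\big)^{-P-\frac{\alpha_1}{\alpha_2}Q-1}\Gamma(P+\frac{\alpha_1}{\alpha_2}Q+1)$.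 $\eta_2=\frac{\pi\lambda_2}{\mathcal A_2}\sum_{n=0}^{N_2-1}\frac1{n!}\sum\binom n{n_2}\frac{n_2!}{\prod p_a!}\frac{(n-n_2)!}{\prod q_a!}\prod_{a=1}^{n_2}\big(\frac{2\pi\lambda_1}{\alpha_1}(\frac{P_1}{P_2})^{2/\alpha_1}B(1+\frac2{\alpha_1},a-\frac2{\alpha_1})\big)^{p_a}\prod_{a=1}^{n-n_2}\big(\frac{2\pi\lambda_2}{\alpha_2}B(1+\frac2{\alpha_2},a-\frac2{\alpha_2})\big)^{q_a}\big(\frac{2\pi\lambda_1}{\alpha_2}B(\frac2{\alpha_2},1-\frac2{\alpha_2})\big)^{-\frac{\alpha_2}{\alpha_1}P-Q-1}\Gamma(\frac{\alpha_2}{\alpha_1}P+Q+1)$ (independent of $U$). $c^{\mathrm{ub}}(U,T_1,T_2)=\eta_1(U,T_1,T_2)$ if $\alpha_1>\alpha_2$ and $\eta_2$ if $\alpha_1<\alpha_2$. When $\alpha_1=\alpha_2=\alpha$: $c_1(U,T_1,T_2)=\frac{\pi\lambda_1}{\mathcal A_1}\sum_{u=0}^U\Pr(u_{\mathrm{IN},0}=u)\sum_{n=0}^{N_1-u-1}\frac1{n!}\sum\binom n{n_2}\frac{n_2!}{\prod p_a!}\frac{(n-n_2)!}{\prod q_a!}\prod_{a=1}^{n_2}\big(\frac{2\pi\lambda_1}{\alpha}B(1+\frac2\alpha,a-\frac2\alpha)\big)^{p_a}\prod_{a=1}^{n-n_2}\big(\frac{2\pi\lambda_2}{\alpha}(\frac{P_2}{P_1})^{2/\alpha}B(1+\frac2\alpha,a-\frac2\alpha)\big)^{q_a}\big(\frac{2\pi}{\alpha}(\lambda_1+\lambda_2(\frac{P_2}{P_1})^{2/\alpha})B(\frac2\alpha,1-\frac2\alpha)\big)^{-P-Q-1}\Gamma(P+Q+1)$,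 and $c_2(T_1,T_2)=\frac{\pi\lambda_2}{\mathcal A_2}\sum_{n=0}^{N_2-1}\frac1{n!}\sum\binom n{n_2}\frac{n_2!}{\prod p_a!}\frac{(n-n_2)!}{\prod q_a!}\prod_{a=1}^{n_2}\big(\frac{2\pi\lambda_1}{\alpha}(\frac{P_1}{P_2})^{2/\alpha}B(1+\frac2\alpha,a-\frac2\alpha)\big)^{p_a}\prod_{a=1}^{n-n_2}\big(\frac{2\pi\lambda_2}{\alpha}B(1+\frac2\alpha,a-\frac2\alpha)\big)^{q_a}\big(\frac{2\pi}{\alpha}(\lambda_1(\frac{P_1}{P_2})^{2/\alpha}+\lambda_2)B(\frac2\alpha,1-\frac2\alpha)\big)^{-P-Q-1}\Gamma(P+Q+1)$. (These are the coefficients of the high-SIR-threshold asymptotic coverage probability, or of its upper bound, for a user-centric interference-nulling scheme with maximum nulling degrees of freedom $U$.) *)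

From HB Require Import structures.
From mathcomp Require Import all_boot all_order all_algebra.
From mathcomp Require Import all_classical all_reals all_analysis.
Set Implicit Arguments. Unset Strict Implicit. Unset Printing Implicit Defensive.
Import Order.TTheory GRing.Theory Num.Theory.
Import numFieldNormedType.Exports.
Local Open Scope classical_set_scope.
Local Open Scope ring_scope.

Section Defs.
Variable R : realType.

Definition rint (D : set R) (f : R -> R) : R :=
  \int[lebesgue_measure]_(x in D) f x.

Definition Gammaf (s : R) : R :=
  rint `]0, +oo[ (fun t => t `^ (s - 1) * expR (- t)).
Definition Betaf (a b : R) : R :=
  rint `]0, 1[ (fun t => t `^ (a - 1) * (1 - t) `^ (b - 1)).

Definition A1 (P1 P2 al1 al2 lam1 lam2 : R) : R :=
  2 * pi * lam1 * rint `[0, +oo[ (fun z =>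
    z * expR (- pi * lam1 * z ^+ 2)
      * expR (- pi * lam2 * (P2 / P1) `^ (2 / al2) * z `^ (2 * al1 / al2))).
Definition A2 (P1 P2 al1 al2 lam1 lam2 : R) : R :=
  2 * pi * lam2 * rint `[0, +oo[ (fun z =>
    z * expR (- pi * lam2 * z ^+ 2)
      * expR (- pi * lam1 * (P1 / P2) `^ (2 / al1) * z `^ (2 * al2 / al1))).

Definition fY1 (P1 P2 al1 al2 lam1 lam2 : R) (y : R) : R :=
  2 * pi * lam1 / A1 P1 P2 al1 al2 lam1 lam2 * y
  * expR (- pi * (lam1 * y ^+ 2 + lam2 * (P2 / P1) `^ (2 / al2) * y `^ (2 * al1 / al2))).
Definition fY2 (P1 P2 al1 al2 lam1 lam2 : R) (y : R) : R :=
  2 * pi * lam2 / A2 P1 P2 al1 al2 lam1 lam2 * y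
  * expR (- pi * (lam1 * (P1 / P2) `^ (2 / al1) * y `^ (2 * al2 / al1) + lam2 * y ^+ 2)).

Definition Lbarj (P1 al1 lamj Pj alj Tj : R) (fYj : R -> R) : R :=
  2 * pi * lamj * rint `[0, +oo[ (fun r =>
    r * rint `[(Pj / (P1 * Tj)) `^ (1 / alj) * r `^ (al1 / alj),
               (Pj / P1) `^ (1 / alj) * r `^ (al1 / alj)] fYj).

Definition Lbar (P1 P2 al1 al2 lam1 lam2 T1 T2 : R) : R :=
  Lbarj P1 al1 lam1 P1 al1 T1 (fY1 P1 P2 al1 al2 lam1 lam2)
  + Lbarj P1 al1 lam2 P2 al2 T2 (fY2 P1 P2 al1 al2 lam1 lam2).

(* Pr(u_{IN,0} = u), truncated Poisson with mean L at level U *)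
Definition poisson_pmf (L : R) (k : nat) : R := expR (- L) * L ^+ k / (k`!)%:R.
Definition PrIN (L : R) (U u : nat) : R :=
  if (u < U)%N then poisson_pmf L u
  else if u == U then fine (\sum_(U <= k <oo) (poisson_pmf L k)%:E)%E
  else 0.

End Defs.

(* M_n = {(m_a)_{a=1}^n in N_0^n : sum_a a m_a = n}; m : 'I_n -> 'I_n.+1,
   index i : 'I_n stands for a = i+1 (each m_a <= n automatically). *)
Definition inM (n : nat) (m : {ffun 'I_n -> 'I_n.+1}) : bool :=
  (\sum_(i < n) i.+1 * m i == n)%N.
Definition msum (n : nat) (m : {ffun 'I_n -> 'I_n.+1}) : nat := (\sum_(i < n) m i)%N.
Definition mfact (n : nat) (m : {ffun 'I_n -> 'I_n.+1}) : nat := (\prod_(i < n) (m i)`!)%N.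

Section Sums.
Variable R : realType.
Local Open Scope ring_scope.

Definition inner_sum (n : nat) (F1 F2 : nat -> R) (G : nat -> nat -> R) : R :=
  \sum_(n2 < n.+1)
   \sum_(p : {ffun 'I_n2 -> 'I_n2.+1} | inM p)
    \sum_(q : {ffun 'I_(n - n2) -> 'I_(n - n2).+1} | inM q)
      ('C(n, n2))%:R * ((n2`!)%:R / (mfact p)%:R)
      * (((n - n2)`!)%:R / (mfact q)%:R)
      * (\prod_(i < n2) F1 i.+1 ^+ p i)
      * (\prod_(i < n - n2) F2 i.+1 ^+ q i)
      * G (msum p) (msum q).

Definition eta1 (N1 : nat) (P1 P2 al1 al2 lam1 lam2 T1 T2 : R) (U : nat) : R :=
  pi * lam1 / A1 P1 P2 al1 al2 lam1 lam2 *
  \sum_(u < U.+1) PrIN (Lbar P1 P2 al1 al2 lam1 lam2 T1 T2) U u *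
   \sum_(n < N1 - u) (n`!)%:R^-1 *
    inner_sum n
      (fun a => 2 * pi * lam1 / al1 * Betaf (1 + 2 / al1) (a%:R - 2 / al1))
      (fun a => 2 * pi * lam2 / al2 * (P2 / P1) `^ (2 / al2)
                * Betaf (1 + 2 / al2) (a%:R - 2 / al2))
      (fun P Q => (2 * pi * lam1 / al1 * Betaf (2 / al1) (1 - 2 / al1))
                    `^ (- P%:R - al1 / al2 * Q%:R - 1)
                  * Gammaf (P%:R + al1 / al2 * Q%:R + 1)).

Definition eta2 (N2 : nat) (P1 P2 al1 al2 lam1 lam2 : R) : R :=
  pi * lam2 / A2 P1 P2 al1 al2 lam1 lam2 *
  \sum_(n < N2) (n`!)%:R^-1 *
    inner_sum n
      (fun a => 2 * pi * lam1 / al1 * (P1 / P2) `^ (2 / al1)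
                * Betaf (1 + 2 / al1) (a%:R - 2 / al1))
      (fun a => 2 * pi * lam2 / al2 * Betaf (1 + 2 / al2) (a%:R - 2 / al2))
      (fun P Q => (2 * pi * lam1 / al2 * Betaf (2 / al2) (1 - 2 / al2))
                    `^ (- (al2 / al1) * P%:R - Q%:R - 1)
                  * Gammaf (al2 / al1 * P%:R + Q%:R + 1)).

Definition cub (N1 N2 : nat) (P1 P2 al1 al2 lam1 lam2 T1 T2 : R) (U : nat) : R :=
  if al2 < al1 then eta1 N1 P1 P2 al1 al2 lam1 lam2 T1 T2 U
  else eta2 N2 P1 P2 al1 al2 lam1 lam2.

Definition c1 (N1 : nat) (P1 P2 al lam1 lam2 T1 T2 : R) (U : nat) : R :=
  pi * lam1 / A1 P1 P2 al al lam1 lam2 *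
  \sum_(u < U.+1) PrIN (Lbar P1 P2 al al lam1 lam2 T1 T2) U u *
   \sum_(n < N1 - u) (n`!)%:R^-1 *
    inner_sum n
      (fun a => 2 * pi * lam1 / al * Betaf (1 + 2 / al) (a%:R - 2 / al))
      (fun a => 2 * pi * lam2 / al * (P2 / P1) `^ (2 / al)
                * Betaf (1 + 2 / al) (a%:R - 2 / al))
      (fun P Q => (2 * pi / al * (lam1 + lam2 * (P2 / P1) `^ (2 / al))
                     * Betaf (2 / al) (1 - 2 / al))
                    `^ (- P%:R - Q%:R - 1)
                  * Gammaf (P%:R + Q%:R + 1)).

Definition c2 (N2 : nat) (P1 P2 al lam1 lam2 : R) : R :=
  pi * lam2 / A2 P1 P2 al al lam1 lam2 *
  \sum_(n < N2) (n`!)%:R^-1 *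
    inner_sum n
      (fun a => 2 * pi * lam1 / al * (P1 / P2) `^ (2 / al)
                * Betaf (1 + 2 / al) (a%:R - 2 / al))
      (fun a => 2 * pi * lam2 / al * Betaf (1 + 2 / al) (a%:R - 2 / al))
      (fun P Q => (2 * pi / al * (lam1 * (P1 / P2) `^ (2 / al) + lam2)
                     * Betaf (2 / al) (1 - 2 / al))
                    `^ (- P%:R - Q%:R - 1)
                  * Gammaf (P%:R + Q%:R + 1)).

Definition objective (N1 N2 : nat) (P1 P2 al1 al2 lam1 lam2 T1 T2 beta : R)
  (U : nat) : R :=
  if al1 != al2 then
    cub N1 N2 P1 P2 al1 al2 lam1 lam2 T1 T2 U * beta `^ (- (2 / Num.max al1 al2))
  else
    (A1 P1 P2 al1 al1 lam1 lam2 * c1 N1 P1 P2 al1 lam1 lam2 T1 T2 U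
     + A2 P1 P2 al1 al1 lam1 lam2 * c2 N2 P1 P2 al1 lam1 lam2)
    * beta `^ (- (2 / al1)).

End Sums.

(* The nulling budget U only enters through the outer mixture
   sum_(u <= U) Pr(u_IN = u) * S(u), where S(u) is the partial sum over
   n < N1 - u of nonnegative terms, hence nonincreasing in u.  The truncated
   Poisson law at level U has the same total mass as the one at level 0, which
   puts all of it on u = 0, where S is largest.  So U = 0 is optimal for every
   beta > 0; when al1 < al2 the objective does not depend on U at all. *)
From Pilot Require Import Defs.
From HB Require Import structures.
From mathcomp Require Import all_boot all_order all_algebra.
From mathcomp Require Import all_classical all_reals all_analysis.
Import Order.TTheory GRing.Theory Num.Theory.
Import numFieldNormedType.Exports.
Local Open Scope ring_scope.

Lemma rint_ge0 (R : realType) (D : set R) (f : R -> R) :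
  (forall x, D x -> 0 <= f x) -> 0 <= rint D f.
Proof. by move=> f_ge0; apply: Rintegral_ge0. Qed.

Lemma Gammaf_ge0 (R : realType) (s : R) : 0 <= Gammaf s.
Proof. by apply: rint_ge0 => x _; rewrite mulr_ge0 ?powR_ge0 ?expR_ge0. Qed.

Lemma Betaf_ge0 (R : realType) (a b : R) : 0 <= Betaf a b.
Proof. by apply: rint_ge0 => x _; rewrite mulr_ge0 ?powR_ge0. Qed.

Ltac nonneg := repeat match goal with
  | |- is_true (0 <= Betaf _ _) => apply: Betaf_ge0
  | |- is_true (0 <= Gammaf _) => apply: Gammaf_ge0
  | |- is_true (0 <= _ * _) => apply: mulr_ge0
  | |- is_true (0 <= _^-1) => rewrite invr_ge0
  | |- is_true (0 <= _ ^+ _) => apply: exprn_ge0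
  | |- is_true (0 <= _ `^ _) => apply: powR_ge0
  | |- is_true (0 <= expR _) => apply: expR_ge0
  | |- is_true (0 <= pi) => apply: pi_ge0
  | |- is_true (0 <= _%:R) => apply: ler0n
  | H : is_true (0 <= ?y) |- is_true (0 <= ?x) => constr_eq x y; exact: H
  | H : is_true (0 < ?y) |- is_true (0 <= ?x) => constr_eq x y; exact: ltW H
  end.

Section TruncatedPoisson.
Variables (R : realType) (L : R).
Hypothesis L_ge0 : 0 <= L.

Lemma poisson_pmf_ge0 (k : nat) : 0 <= Defs.poisson_pmf L k.
Proof. by rewrite /Defs.poisson_pmf; nonneg. Qed.

Lemma is_cvg_series_poisson_pmf : cvgn (series (Defs.poisson_pmf L)).
Proof.
have -> : series (Defs.poisson_pmf L) = (fun=> expR (- L)) \* series (exp_coeff L).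
  apply/funext => n; rewrite /series /= mulr_sumr; apply: eq_bigr => k _.
  by rewrite /Defs.poisson_pmf /exp_coeff /= mulrA.
exact: is_cvgM (is_cvg_cst _) (is_cvg_series_exp_coeff L).
Qed.

Lemma poisson_series_fin_num :
  (\sum_(0 <= k <oo) (Defs.poisson_pmf L k)%:E)%E \is a fin_num.
Proof.
have -> : (\sum_(0 <= k <oo) (Defs.poisson_pmf L k)%:E)%E
          = (limn (series (Defs.poisson_pmf L)))%:E.
  rewrite -EFin_lim; last exact: is_cvg_series_poisson_pmf.
  by congr (limn _); apply/funext => n; rewrite /series /= sumEFin.
by [].
Qed.

Lemma PrIN00_split (U : nat) :
  PrIN L 0 0 = \sum_(k < U) Defs.poisson_pmf L k + PrIN L U U.
Proof.
rewrite /PrIN !ltnn !eqxx.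
have e := @nneseries_split R (fun k => (Defs.poisson_pmf L k)%:E) 0 U.
rewrite add0n in e; have {}e := e (fun k _ => poisson_pmf_ge0 k).
have := poisson_series_fin_num; rewrite e fin_numD => /andP[fin_head fin_tail].
by rewrite fineD // sumEFin big_mkord.
Qed.

Lemma PrIN_ge0 (U u : nat) : 0 <= PrIN L U u.
Proof.
rewrite /PrIN; case: ifP => _; first exact: poisson_pmf_ge0.
case: ifP => _ //; apply: fine_ge0; apply: nneseries_ge0 => k _ _.
by rewrite lee_fin poisson_pmf_ge0.
Qed.

(* Moving the mass of the atoms u < U and of the tail at U down to u = 0. *)
Lemma truncated_poisson_mixture_le (U : nat) (S : nat -> R) :
  (forall m n, (m <= n)%N -> S n <= S m) ->
  \sum_(u < U.+1) PrIN L U u * S u <= \sum_(u < 1) PrIN L 0 u * S u.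
Proof.
move=> S_noninc; rewrite big_ord1 (PrIN00_split U) mulrDl big_ord_recr /=.
apply: lerD; last by apply: ler_wpM2l; [exact: PrIN_ge0 | exact: S_noninc].
rewrite mulr_suml; apply: ler_sum => i _.
by rewrite /PrIN ltn_ord; apply: ler_wpM2l; [exact: poisson_pmf_ge0 | exact: S_noninc].
Qed.

End TruncatedPoisson.

Lemma partial_sum_sub_noninc (R : realType) (N : nat) (t : nat -> R) :
  (forall n, 0 <= t n) -> forall u v, (u <= v)%N ->
  \sum_(n < N - v) t n <= \sum_(n < N - u) t n.
Proof.
move=> t_ge0 u v uv; rewrite -!(big_mkord xpredT).
rewrite (@big_cat_nat _ _ _ (N - v) 0 (N - u)) ?leq_sub2l //=.
by rewrite lerDl sumr_ge0.
Qed.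

Lemma truncated_poisson_mixture_partial_sums_le (R : realType) (L : R) (N U : nat)
    (t : nat -> R) :
  0 <= L -> (forall n, 0 <= t n) ->
  \sum_(u < U.+1) PrIN L U u * \sum_(n < N - u) t n
  <= \sum_(u < 1) PrIN L 0 u * \sum_(n < N - u) t n.
Proof.
move=> L_ge0 t_ge0.
apply: (@truncated_poisson_mixture_le R L L_ge0 U (fun u => \sum_(n < N - u) t n)).
exact: partial_sum_sub_noninc.
Qed.

Section Nonnegativity.
Variables (R : realType) (P1 P2 al1 al2 lam1 lam2 : R).
Hypotheses (lam1_ge0 : 0 <= lam1) (lam2_ge0 : 0 <= lam2).

Lemma A1_ge0 : 0 <= A1 P1 P2 al1 al2 lam1 lam2.
Proof.
by rewrite /A1; nonneg; apply: rint_ge0 => z; rewrite /= in_itv /= andbT => z_ge0; nonneg.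
Qed.

Lemma A2_ge0 : 0 <= A2 P1 P2 al1 al2 lam1 lam2.
Proof.
by rewrite /A2; nonneg; apply: rint_ge0 => z; rewrite /= in_itv /= andbT => z_ge0; nonneg.
Qed.

Lemma Lbarj_ge0 (al lamj Pj alj Tj : R) (fYj : R -> R) : 0 <= lamj ->
  (forall y, 0 <= y -> 0 <= fYj y) -> 0 <= Lbarj P1 al lamj Pj alj Tj fYj.
Proof.
move=> lamj_ge0 fYj_ge0; rewrite /Lbarj; nonneg.
apply: rint_ge0 => r; rewrite /= in_itv /= andbT => r_ge0; nonneg.
apply: rint_ge0 => y; rewrite /= in_itv /= => /andP[ylo _].
by apply: fYj_ge0; apply: le_trans ylo; nonneg.
Qed.

Lemma Lbar_ge0 (T1 T2 : R) : 0 <= Lbar P1 P2 al1 al2 lam1 lam2 T1 T2.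
Proof.
have A1p := A1_ge0; have A2p := A2_ge0.
by apply: addr_ge0; apply: Lbarj_ge0 => // y y_ge0; rewrite /fY1 /fY2; nonneg.
Qed.

End Nonnegativity.

Lemma inner_sum_ge0 (R : realType) n (F1 F2 : nat -> R) (G : nat -> nat -> R) :
  (forall a, 0 <= F1 a) -> (forall a, 0 <= F2 a) -> (forall p q, 0 <= G p q) ->
  0 <= inner_sum n F1 F2 G.
Proof.
move=> F1_ge0 F2_ge0 G_ge0; apply: sumr_ge0 => n2 _.
apply: sumr_ge0 => p _; apply: sumr_ge0 => q _.
by rewrite !mulr_ge0 ?divr_ge0 ?prodr_ge0 // => i _; rewrite exprn_ge0.
Qed.

Section OptimalNullingBudget.
Variables (R : realType) (N1 : nat) (P1 P2 al1 al2 lam1 lam2 T1 T2 : R).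
Hypotheses (al1_gt0 : 0 < al1) (al2_gt0 : 0 < al2).
Hypotheses (lam1_gt0 : 0 < lam1) (lam2_gt0 : 0 < lam2).

Lemma eta1_le_eta1_0 (U : nat) :
  eta1 N1 P1 P2 al1 al2 lam1 lam2 T1 T2 U <= eta1 N1 P1 P2 al1 al2 lam1 lam2 T1 T2 0.
Proof.
have A1p : 0 <= A1 P1 P2 al1 al2 lam1 lam2 by apply: A1_ge0; exact: ltW.
have Lp : 0 <= Lbar P1 P2 al1 al2 lam1 lam2 T1 T2 by apply: Lbar_ge0; exact: ltW.
rewrite /eta1; apply: ler_wpM2l; first by nonneg.
apply: (truncated_poisson_mixture_partial_sums_le _ _ _ _
    (fun n => n`!%:R^-1 * inner_sum n _ _ _)) => // n.
by nonneg; apply: inner_sum_ge0 => *; nonneg.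
Qed.

Lemma c1_le_c1_0 (U : nat) :
  c1 N1 P1 P2 al1 lam1 lam2 T1 T2 U <= c1 N1 P1 P2 al1 lam1 lam2 T1 T2 0.
Proof.
have A1p : 0 <= A1 P1 P2 al1 al1 lam1 lam2 by apply: A1_ge0; exact: ltW.
have Lp : 0 <= Lbar P1 P2 al1 al1 lam1 lam2 T1 T2 by apply: Lbar_ge0; exact: ltW.
rewrite /c1; apply: ler_wpM2l; first by nonneg.
apply: (truncated_poisson_mixture_partial_sums_le _ _ _ _
    (fun n => n`!%:R^-1 * inner_sum n _ _ _)) => // n.
by nonneg; apply: inner_sum_ge0 => *; nonneg.
Qed.

End OptimalNullingBudget.

Theorem lemma5 (R : realType) (N1 N2 : nat) (P1 P2 al1 al2 lam1 lam2 T1 T2 : R) :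
  (N2 < N1)%N -> (1 <= N2)%N ->
  0 < P1 -> 0 < P2 -> 2 < al1 -> 2 < al2 -> 0 < lam1 -> 0 < lam2 ->
  1 <= T1 -> 1 <= T2 ->
  exists beta_low : R, forall beta : R, beta_low < beta ->
    forall U : nat, (U < N1)%N ->
      objective N1 N2 P1 P2 al1 al2 lam1 lam2 T1 T2 beta U
      <= objective N1 N2 P1 P2 al1 al2 lam1 lam2 T1 T2 beta 0.
Proof.
move=> _ _ _ _ al1_gt2 al2_gt2 lam1_gt0 lam2_gt0 _ _.
have al1_gt0 : 0 < al1 by apply: lt_trans al1_gt2.
have al2_gt0 : 0 < al2 by apply: lt_trans al2_gt2.
exists 0 => beta _ U _; rewrite /objective.
case: ifP => _; apply: ler_wpM2r; try exact: powR_ge0.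
  rewrite /cub; case: ifP => _; last exact: lexx.
  exact: eta1_le_eta1_0.
rewrite lerD2r; apply: ler_wpM2l; first by apply: A1_ge0; exact: ltW.
exact: c1_le_c1_0.
Qed.
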